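(* Let $\Gamma$ be a coloring and $\Omega$ a $k$-ordering of $T_{d,k}$. For every $d$-cell $\tau$ and every cell $\rho\subseteq\tau$, the set $L_{\rho,\tau}=\{g\in G_{d,k}: \rho\subseteq g.\tau\}$ equals the subgroup $K_{[\![d]\!]\setminus\Gamma(\rho)}$. In particular, it depends only on the color of $\rho$.
   Context: Fix $d,k\ge1$, $[\![d]\!]=\{0,\dots,d\}$. $G_{d,k}=\langle\alpha_0,\dots,\alpha_d\mid\alpha_i^k=e\rangle$; for $J\subseteq[\![d]\!]$, $K_J=\langle\alpha_j:j\in J\rangle$ ($K_\emptyset=\{e\}$). The arboreal complex $T_{d,k}$: start from a single $d$-simplex $\mathcal T$, attach to each of its $(d-1)$-faces $k-1$ new $d$-simplices each using a new vertex, and inductively attach to each $(d-1)$-face created in the previous step $k-1$ new $d$-simplices each using a new vertex; $T_{d,k}$ is the union. A coloring $\Gamma$ is a map from vertices to $[\![d]\!]$ injective on each $d$-cell, extended to cells by $\Gamma(\sigma)=\{\Gamma(v):v\in\sigma\}$. A $k$-ordering $\Omega$ assigns to each $(d-1)$-cell $\sigma$ a homomorphism $\Omega_\sigma:\mathbb Z/k\mathbb Z\to\mathrm{Sym}(\delta(\sigma))$ with transitive image, $\delta(\sigma)$ the set of $d$-cells containing $\sigma$. Left action on $d$-cells: $\alpha_i^l.\tau=\Omega_\sigma(l).\tau$ where $\sigma$ is the $(d-1)$-face of $\tau$ of color $[\![d]\!]\setminus\{i\}$, extended to words letter by letter (right-most first); this is a well-defined action of $G_{d,k}$. (Equivalently,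 $L_{\rho,\tau}$ is the set of $g$ for which the cell of $g.\tau$ of color $\Gamma(\rho)$ is $\rho$.) *)

From HB Require Import structures.
From mathcomp Require Import all_boot.
Set Implicit Arguments. Unset Strict Implicit. Unset Printing Implicit Defensive.

(* A d-cell is encoded by the history of its construction: a sequence of  *)
(* steps (i, j).  Starting from the root simplex (code [::]), whose       *)
(* vertices are Root 0, ..., Root d placed at positions 0..d, the step    *)
(* (i, j) attaches to the current cell, along its (d-1)-face omitting the *)
(* vertex at position i, the j-th (1 <= j <= k-1) of the k-1 new          *)
(* d-simplices; the new simplex has the vertex at position i replaced by  *)
(* a new vertex.  For a non-root cell only the faces created at its own   *)
(* step (those containing its new vertex, i.e. omitting a position other  *)
(* than the last replaced one) get new simplices attached.                *)

Definition step (d : nat) := ('I_d.+1 * nat)%type.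

(* vertices: inl i = i-th vertex of the initial simplex;
             inr q = the new vertex of the d-cell with code q (q <> [::]) *)
Definition vtx (d : nat) := ('I_d.+1 + seq ('I_d.+1 * nat))%type.

Fixpoint valid_from (d k : nat) (prev : option 'I_d.+1)
    (p : seq ('I_d.+1 * nat)) : bool :=
  if p is (i, j) :: p' then
    [&& prev != Some i, 0 < j, j < k & valid_from k (Some i) p']
  else true.

Definition dcell (d k : nat) (p : seq ('I_d.+1 * nat)) : bool :=
  valid_from k None p.

Definition vertex (d : nat) (p : seq ('I_d.+1 * nat)) (i : 'I_d.+1) : vtx d :=
  let t := index i (rev (map fst p)) in
  if t < size p then inr (take (size p - t) p) else inl i.

Definition cverts (d : nat) (p : seq ('I_d.+1 * nat)) : seq (vtx d) :=
  map (vertex p) (enum 'I_d.+1).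

(* cells are finite vertex sets (represented by sequences, read as sets) *)
Definition is_cell (d k : nat) (rho : seq (vtx d)) : Prop :=
  rho != [::] /\ exists p, dcell k p /\ {subset rho <= cverts p}.

Definition facet (d k : nat) (sigma : seq (vtx d)) : Prop :=
  is_cell k sigma /\ size (undup sigma) = d.

Definition in_delta (d k : nat) (sigma : seq (vtx d)) (p : seq ('I_d.+1 * nat))
  : Prop := dcell k p /\ {subset sigma <= cverts p}.

Definition coloring (d k : nat) (Gam : vtx d -> 'I_d.+1) : Prop :=
  forall p, dcell k p -> {in cverts p &, injective Gam}.

(* A k-ordering: to every (d-1)-cell sigma (a set: Omega sigma only depends
   on sigma as a set), a homomorphism Z/kZ -> Sym(delta(sigma)) with
   transitive image.  The homomorphism is given on representatives
   l : nat of Z/kZ: l |-> Omega sigma l, additive, with 0 and k acting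
   trivially (so it factors through Z/kZ and lands in Sym(delta sigma)). *)
Definition k_ordering (d k : nat)
    (Om : seq (vtx d) -> nat -> seq ('I_d.+1 * nat) -> seq ('I_d.+1 * nat))
    : Prop :=
  forall sigma, facet k sigma ->
    [/\ (forall sigma' l p, sigma' =i sigma -> in_delta k sigma p ->
           Om sigma' l p = Om sigma l p),
        (forall p, in_delta k sigma p ->
           [/\ forall l, in_delta k sigma (Om sigma l p),
               Om sigma 0 p = p,
               Om sigma k p = p &
               forall a b, Om sigma (a + b) p = Om sigma a (Om sigma b p)]) &
        (forall p q, in_delta k sigma p -> in_delta k sigma q ->
           exists l, Om sigma l p = q)].

(* The group G_{d,k} = < alpha_0..alpha_d | alpha_i^k = e >.              *)
(* Elements are represented by words in letters (i, l) standing for       *)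
(* alpha_i^l; two words represent the same element iff they are related   *)
(* by weq, the congruence generated by the defining relations.            *)

Definition word (d : nat) := seq ('I_d.+1 * nat).

Inductive weq (d k : nat) : word d -> word d -> Prop :=
| weq_refl w : weq k w w
| weq_sym w1 w2 : weq k w1 w2 -> weq k w2 w1
| weq_trans w1 w2 w3 : weq k w1 w2 -> weq k w2 w3 -> weq k w1 w3
| weq_cat u1 u2 v1 v2 : weq k u1 u2 -> weq k v1 v2 -> weq k (u1 ++ v1) (u2 ++ v2)
| weq_merge (i : 'I_d.+1) a b : weq k [:: (i, a); (i, b)] [:: (i, a + b)]
| weq_zero (i : 'I_d.+1) : weq k [:: (i, 0)] [::]
| weq_pow (i : 'I_d.+1) : weq k [:: (i, k)] [::].

(* g lies in K_J = < alpha_j : j in J > (inverses are positive powers, so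
   the subgroup generated is the set of products of powers of the alpha_j) *)
Definition inK (d k : nat) (J : pred 'I_d.+1) (g : word d) : Prop :=
  exists w : word d, all (fun x => J x.1) w /\ weq k g w.

(* Left action on d-cells: alpha_i^l . tau = Omega_sigma(l) . tau, sigma the
   (d-1)-face of tau of color [[d]] \ {i}; words act letter by letter,
   right-most first. *)
Definition act_letter (d : nat) (Gam : vtx d -> 'I_d.+1)
    (Om : seq (vtx d) -> nat -> seq ('I_d.+1 * nat) -> seq ('I_d.+1 * nat))
    (x : 'I_d.+1 * nat) (tau : seq ('I_d.+1 * nat)) : seq ('I_d.+1 * nat) :=
  Om [seq v <- cverts tau | Gam v != x.1] x.2 tau.

Definition act (d : nat) (Gam : vtx d -> 'I_d.+1)
    (Om : seq (vtx d) -> nat -> seq ('I_d.+1 * nat) -> seq ('I_d.+1 * nat))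
    (g : word d) (tau : seq ('I_d.+1 * nat)) : seq ('I_d.+1 * nat) :=
  foldr (act_letter Gam Om) tau g.

From HB Require Import structures.
From mathcomp Require Import all_boot.
Set Implicit Arguments. Unset Strict Implicit. Unset Printing Implicit Defensive.

(* Codes of d-cells form a rooted tree under the prefix order, and the vertex at
   position i of two cells c ++ s and c ++ t (c their longest common prefix) is
   the same exactly when neither branch s nor t takes a step at position i.
   A colouring gives the vertex at position i the colour of the i-th root
   vertex, and a nontrivial power of alpha_i moves a d-cell to a different
   neighbour across its face missing position i.
   A word in the alpha_j with j outside Gamma(rho) keeps every face containing
   rho, hence keeps rho.  Conversely, reduce g to a word in which consecutive
   letters use distinct generators: it walks in the tree without backtracking,
   so every generator alpha_i it uses replaces the vertex of tau of colour i,
   and rho <= g.tau forces i to avoid Gamma(rho). *)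

(* [c] is the longest common prefix of [c ++ s] and [c ++ t]. *)
Definition forked (T : eqType) (s t : seq T) : bool :=
  if s is x :: _ then if t is y :: _ then x != y else true else true.

Lemma forkedC (T : eqType) (s t : seq T) : forked s t = forked t s.
Proof. by case: s t => [|x s] [|y t] //=; rewrite eq_sym. Qed.

Lemma forked_split (T : eqType) (p q : seq T) :
  exists c s t, [/\ p = c ++ s, q = c ++ t & forked s t].
Proof.
elim: p q => [|x p IH] [|y q]; try by exists [::], [::], [::].
- by exists [::], [::], (y :: q).
- by exists [::], (x :: p), [::].
case: (eqVneq x y) => [<-|xy]; last by exists [::], (x :: p), (y :: q).
by have [c [s [t [-> -> fk]]]] := IH q; exists (x :: c), s, t.
Qed.

Lemma forked_prefix (T : eqType) (s t s' t' : seq T) :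
  forked s t -> prefix s' s -> prefix t' t -> s' != [::] -> t' != [::] -> s' != t'.
Proof.
case: s' t' s t => [|x s'] [|y t'] [|x' s] [|y' t] //= fk.
move=> /andP[/eqP-> _] /andP[/eqP-> _] _ _.
by apply: contraNneq fk => -[->].
Qed.

Section Codes.

Variable d : nat.
Implicit Types (p q r c s t : seq ('I_d.+1 * nat)) (i : 'I_d.+1).

Definition last_pos (prev : option 'I_d.+1) s : option 'I_d.+1 :=
  if s is y :: s' then Some (last y s').1 else prev.

Lemma valid_from_cat k prev s t :
  valid_from k prev (s ++ t) = valid_from k prev s && valid_from k (last_pos prev s) t.
Proof.
elim: s prev => [|[i j] s IH] prev //=.
by rewrite IH; case: s {IH} => [|y s] /=; rewrite ?andbT !andbA.
Qed.

Lemma dcell_rcons k p x :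
  dcell k (rcons p x) = [&& dcell k p, last_pos None p != Some x.1, 0 < x.2 & x.2 < k].
Proof. by rewrite /dcell -cats1 valid_from_cat; case: x => i j /=; rewrite andbT. Qed.

Lemma vertex_rcons_last p x : vertex (rcons p x) x.1 = inr (rcons p x).
Proof.
rewrite /vertex map_rcons rev_rcons /= eqxx size_rcons subn0 ltnS leq0n.
by rewrite take_oversize ?size_rcons.
Qed.

Lemma vertex_rcons_other p x i : i != x.1 -> vertex (rcons p x) i = vertex p i.
Proof.
move=> ix; rewrite /vertex map_rcons rev_rcons /= eq_sym (negbTE ix).
rewrite size_rcons ltnS subSS; case: ifP => // _.
by rewrite -cats1 takel_cat // leq_subr.
Qed.

(* The position of a vertex in every d-cell containing it. *)
Definition vpos (v : vtx d) : 'I_d.+1 :=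
  match v with inl i => i | inr s => (last (ord0, 0) s).1 end.

Lemma vertexK p : cancel (vertex p) vpos.
Proof.
elim/last_ind: p => [|p x IH] i //.
case: (eqVneq i x.1) => [->|ix]; last by rewrite vertex_rcons_other.
by rewrite vertex_rcons_last /= last_rcons.
Qed.

Lemma vertex_pos_eq p q i i' : vertex p i = vertex q i' -> i = i'.
Proof. by move=> e; rewrite -(vertexK p i) e vertexK. Qed.

Lemma mem_cverts_vertex p q i : (vertex p i \in cverts q) = (vertex p i == vertex q i).
Proof.
apply/mapP/eqP => [[i' _ e]|->]; last by exists i; rewrite ?mem_enum.
by rewrite e (vertex_pos_eq e).
Qed.

Lemma vertex_in_cverts p i : vertex p i \in cverts p.
Proof. by rewrite mem_cverts_vertex. Qed.

Lemma vertex_inj p : injective (vertex p).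
Proof. exact: can_inj (vertexK p). Qed.

Lemma vertex_prefix p i s : vertex p i = inr s -> prefix s p.
Proof.
elim/last_ind: p => [|p x IH] //.
case: (eqVneq i x.1) => [->|ix]; last first.
  by rewrite vertex_rcons_other // => /IH /prefix_trans; apply; apply: prefix_rcons.
by rewrite vertex_rcons_last => -[<-]; apply: prefix_refl.
Qed.

Lemma vertex_cat_notin c s i : i \notin map fst s -> vertex (c ++ s) i = vertex c i.
Proof.
elim/last_ind: s => [|s x IH]; first by rewrite cats0.
rewrite map_rcons mem_rcons in_cons negb_or => /andP[ix /IH <-].
by rewrite -rcons_cat vertex_rcons_other.
Qed.

Lemma vertex_cat_in c s i : i \in map fst s ->
  exists2 s', vertex (c ++ s) i = inr (c ++ s') & (s' != [::]) && prefix s' s.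
Proof.
elim/last_ind: s => [|s x IH] //; rewrite -rcons_cat.
case: (eqVneq i x.1) => [->|ix].
  exists (rcons s x); first by rewrite vertex_rcons_last rcons_cat.
  by rewrite prefix_refl andbT; case: (s) {IH}.
rewrite map_rcons mem_rcons in_cons (negbTE ix) /= vertex_rcons_other // => /IH.
case=> s' -> /andP[s'0 s's]; exists s' => //.
by rewrite s'0 (prefix_trans s's) ?prefix_rcons.
Qed.

Lemma vertex_cat_forked_neq c s t i : forked s t -> i \in map fst s ->
  vertex (c ++ s) i != vertex (c ++ t) i.
Proof.
move=> fk ins; have [s' -> /andP[s'0 s's]] := vertex_cat_in c ins.
case: (boolP (i \in map fst t)) => [int|nint].
  have [t' -> /andP[t'0 t't]] := vertex_cat_in c int.
  apply: contra (forked_prefix fk s's t't s'0 t'0) => /eqP[/eqP].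
  by rewrite eqseq_cat // eqxx.
rewrite vertex_cat_notin //; apply/eqP; case e: (vertex c i) => [//|u] [eu].
have := size_prefix (vertex_prefix e); rewrite -eu size_cat.
by case: s' s'0 {s's eu} => // ? ? /=; rewrite addnS ltnNge leq_addr.
Qed.

Lemma vertex_cat_forked c s t i : forked s t ->
  (vertex (c ++ s) i == vertex (c ++ t) i) = (i \notin map fst (s ++ t)).
Proof.
move=> fk; rewrite map_cat mem_cat negb_or.
case: (boolP (i \in map fst s)) => [ins|ns] /=.
  exact: negbTE (vertex_cat_forked_neq c fk ins).
case: (boolP (i \in map fst t)) => [int|nt] /=.
  by rewrite eq_sym (negbTE (vertex_cat_forked_neq c _ int)) // forkedC.
by rewrite !vertex_cat_notin ?eqxx.
Qed.

Lemma exists_dcell_last_pos_neq k p i : dcell k p -> exists r,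
  [/\ dcell k r, last_pos None r != Some i & forall i', i' != i -> vertex p i' = vertex r i'].
Proof.
move=> dp; case: (eqVneq (last_pos None p) (Some i)) => [e|ne]; last by exists p.
case/lastP: p e dp => [//|r x]; rewrite dcell_rcons => e /and4P[dr rx _ _].
have xi : x.1 = i by move: e; case: (r) => [|y r'] /= [<-]; rewrite ?last_rcons.
exists r; rewrite -xi; split => // i' i'x.
by rewrite vertex_rcons_other.
Qed.

Definition adjacent i p q : Prop :=
  [\/ exists j, q = rcons p (i, j),
      exists j, p = rcons q (i, j) |
      exists r j j', [/\ p = rcons r (i, j), q = rcons r (i, j') & j != j']].

Lemma dcell_tail_single k c s i : dcell k (c ++ s) -> all (fun y => y.1 == i) s ->
  s = [::] \/ exists j, s = [:: (i, j)].
Proof.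
case: s => [|[i1 j1] [|[i2 j2] s]] /=; first by left.
  by rewrite andbT => _ /eqP ->; right; exists j1.
rewrite /dcell valid_from_cat => /andP[_] /= /and4P[_ _ _ /and4P[i12 _ _ _]].
by case/and3P=> /eqP e1 /eqP e2 _; rewrite e1 e2 eqxx in i12.
Qed.

Lemma adjacent_of_vertex_agree k p q i : dcell k p -> dcell k q -> q != p ->
  (forall i', i' != i -> vertex p i' = vertex q i') -> adjacent i p q.
Proof.
move=> dp dq qp agree; have [c [s [t [ep eq_q fk]]]] := forked_split p q.
have only_i u : u \in s ++ t -> u.1 == i.
  move=> ust; apply: contraT => ui; have := vertex_cat_forked c u.1 fk.
  by rewrite -ep -eq_q (agree _ ui) eqxx map_f.
have tail_single u : u = s \/ u = t -> u = [::] \/ exists j, u = [:: (i, j)].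
  case=> ->; apply: (dcell_tail_single (k := k) (c := c)).
  - by rewrite -ep.
  - by apply/allP => y ys; apply: only_i; rewrite mem_cat ys.
  - by rewrite -eq_q.
  - by apply/allP => y yt; apply: only_i; rewrite mem_cat yt orbT.
have [sn|[j sj]] := tail_single s (or_introl erefl);
have [tn|[j' tj]] := tail_single t (or_intror erefl); subst s t.
- by rewrite ep eq_q eqxx in qp.
- by constructor 1; exists j'; rewrite eq_q ep cats0 cats1.
- by constructor 2; exists j; rewrite ep eq_q cats0 cats1.
constructor 3; exists c, j, j'; rewrite ep eq_q !cats1; split => //.
by apply: contraNneq fk => ->.
Qed.

(* For codes [c ++ s] and [c ++ t] with forked branches, the position of the
   step taken first when walking in the tree from [c ++ t] towards [c ++ s]. *)
Definition toward s t : option 'I_d.+1 :=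
  if t is y :: t' then Some (last y t').1 else omap fst (ohead s).

Lemma toward_mem s t i : toward s t = Some i -> i \in map fst (s ++ t).
Proof.
case: t => [|y t] /=; last first.
  by case=> <-; rewrite map_cat mem_cat (map_f fst (mem_last y t)) orbT.
by case: s => [|x s] //= [<-]; rewrite mem_head.
Qed.

Lemma toward_cat_rcons c s t r x : c ++ t = rcons r x -> t != [::] ->
  toward s t = Some x.1.
Proof.
case: t => [|y t] // e _ /=; have := congr1 (last (ord0, 0)) e.
by rewrite last_cat last_rcons /= => ->.
Qed.

(* Crossing a position other than the one leading back towards [p0] moves
   further away from [p0]. *)
Lemma forked_step p0 c s t q i :
  p0 = c ++ s -> forked s t -> toward s t != Some i -> adjacent i (c ++ t) q ->
  exists c' s' t', [/\ p0 = c' ++ s', q = c' ++ t', forked s' t',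
    toward s' t' = Some i & {subset map fst (s ++ t) <= map fst (s' ++ t')}].
Proof.
move=> -> fk ti [[j ->]|[j e]|[r [j [j' [e -> jj]]]]].
- exists c, s, (rcons t (i, j)); split; rewrite ?rcons_cat //.
  + case: t fk ti => [|y t] fk ti; last by rewrite rcons_cons.
    by case: s {fk} ti => [|x s] //=; apply: contraNneq => ->.
  + by case: t {fk ti} => [|y t] //=; rewrite last_rcons.
  + by move=> x xst; rewrite -cats1 catA map_cat mem_cat xst.
- case: t fk ti e => [|y t] fk ti e; last by rewrite (toward_cat_rcons s e) ?eqxx in ti.
  exists q, ((i, j) :: s), [::]; rewrite cats0 in e; rewrite e cat_rcons.
  by split; rewrite ?cats0 // => x xs; rewrite in_cons xs orbT.
- case: t fk ti e => [|y t] fk ti e; last by rewrite (toward_cat_rcons s e) ?eqxx in ti.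
  exists r, ((i, j) :: s), [:: (i, j')]; rewrite cats0 in e; rewrite e cat_rcons cats1.
  split => //; first by apply: contraNneq jj => -[->].
  by move=> x; rewrite cats0 => xs; rewrite /= in_cons map_cat mem_cat xs orbT.
Qed.

Lemma vertex_forked_notin_cverts c s t i : forked s t -> i \in map fst (s ++ t) ->
  vertex (c ++ s) i \notin cverts (c ++ t).
Proof. by move=> fk it; rewrite mem_cverts_vertex vertex_cat_forked // it. Qed.

End Codes.

Section Words.

Variables d k : nat.
Hypothesis k_gt0 : 0 < k.
Implicit Types (w : word d) (i : 'I_d.+1).

Fixpoint reduced w : bool :=
  if w is x :: w' then
    [&& 0 < x.2 < k, (if w' is y :: _ then x.1 != y.1 else true) & reduced w']
  else true.

Lemma weq_letter_mod i l : weq k [:: (i, l)] [:: (i, l %% k)].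
Proof.
rewrite {1}(divn_eq l k); elim: (l %/ k) => [|q IH].
  by rewrite mul0n add0n; constructor.
rewrite mulSn -addnA.
apply: weq_trans (weq_sym (weq_merge _ i k (q * k + l %% k))) _.
exact: weq_cat (weq_pow _ i) IH.
Qed.

Lemma weq_cons_reduced i l w : reduced w ->
  (if w is y :: _ then i != y.1 else true) ->
  exists2 w', weq k ((i, l) :: w) w' & reduced w'.
Proof.
move=> rw hw; have e : weq k ((i, l) :: w) ((i, l %% k) :: w).
  exact: weq_cat (weq_letter_mod i l) (weq_refl k w).
case: (posnP (l %% k)) => [l0|lp].
  exists w => //; apply: weq_trans e _; rewrite l0.
  exact: weq_cat (weq_zero k i) (weq_refl k w).
by exists ((i, l %% k) :: w); rewrite //= lp ltn_pmod //= hw rw.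
Qed.

Lemma weq_reduced w : exists2 w', weq k w w' & reduced w'.
Proof.
elim: w => [|[i l] g [w gw rw]]; first by exists [::] => //; constructor.
have [w' ww' rw'] : exists2 w', weq k ((i, l) :: w) w' & reduced w'.
  case: w rw {gw} => [|[i' l'] w] rw; first exact: weq_cons_reduced.
  case: (eqVneq i i') rw => [<-|ii'] rw; last exact: weq_cons_reduced.
  move: rw => /= /and3P[_ hw rw].
  have [w' ww' rw'] := weq_cons_reduced (l + l') rw hw.
  exists w' => //; apply: weq_trans _ ww'.
  exact: weq_cat (weq_merge _ i l l') (weq_refl k w).
exists w' => //; apply: weq_trans _ ww'.
exact: weq_cat (weq_refl k [:: (i, l)]) gw.
Qed.

End Words.

Section Action.

Variables (d k : nat) (Gam : vtx d -> 'I_d.+1)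
  (Om : seq (vtx d) -> nat -> seq ('I_d.+1 * nat) -> seq ('I_d.+1 * nat)).
Hypotheses (d_gt0 : 0 < d) (Gam_col : coloring k Gam) (Om_ord : k_ordering k Om).
Implicit Types (p q : seq ('I_d.+1 * nat)) (i : 'I_d.+1) (a : 'I_d.+1).

Definition root_color i := Gam (inl i).

Lemma root_color_inj : injective root_color.
Proof.
move=> i i' e; apply: (@vertex_pos_eq _ [::] [::]).
exact: @Gam_col [::] isT _ _ (vertex_in_cverts [::] i) (vertex_in_cverts [::] i') e.
Qed.

Lemma root_color_surj a : exists i, root_color i = a.
Proof. by have /codomP[i ->] := injF_onto root_color_inj a; exists i. Qed.

Lemma color_vertex p i : dcell k p -> Gam (vertex p i) = root_color i.
Proof.
elim/last_ind: p i => [|p x IH] i // dpx.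
have dp : dcell k p by move: dpx; rewrite dcell_rcons => /andP[].
case: (eqVneq i x.1) => [->|ix]; last by rewrite vertex_rcons_other // IH.
have [i1 e1] := root_color_surj (Gam (vertex (rcons p x) x.1)).
case: (eqVneq i1 x.1) => [e|i1x]; first by rewrite -e1 e.
have := Gam_col dpx (vertex_in_cverts _ x.1) (vertex_in_cverts _ i1).
rewrite (vertex_rcons_other _ i1x) IH // -e1 => /(_ erefl) /vertex_pos_eq x1i1.
by rewrite x1i1 eqxx in i1x.
Qed.

Definition opp_face p a := [seq v <- cverts p | Gam v != a].

Lemma opp_faceP p a v : dcell k p ->
  reflect (exists2 i, v = vertex p i & root_color i != a) (v \in opp_face p a).
Proof.
move=> dp; rewrite mem_filter; apply: (iffP andP) => [[va /mapP[i _ ev]]|[i -> ia]].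
  by exists i; rewrite // -(color_vertex i dp) -ev.
by rewrite color_vertex // ia vertex_in_cverts.
Qed.

Lemma opp_face_sub p a : {subset opp_face p a <= cverts p}.
Proof. by move=> v; rewrite mem_filter => /andP[]. Qed.

Lemma facet_opp_face p a : dcell k p -> facet k (opp_face p a).
Proof.
move=> dp; have [i0 <-] := root_color_surj a.
have opp_uniq : uniq (opp_face p (root_color i0)).
  by rewrite filter_uniq // map_inj_uniq ?enum_uniq //; apply: vertex_inj.
have opp_size : size (opp_face p (root_color i0)) = d.
  rewrite size_filter count_map (eq_count (a2 := predC (pred1 i0))); last first.
    by move=> i /=; rewrite color_vertex // (inj_eq root_color_inj).
  have := count_predC (pred1 i0) (enum 'I_d.+1).
  by rewrite size_enum_ord (count_uniq_mem _ (enum_uniq _)) mem_enum add1n => -[].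
split; last by rewrite undup_id.
split; last by exists p; split => //; apply: opp_face_sub.
by apply: contraTneq d_gt0 => e; rewrite -opp_size e.
Qed.

Lemma in_delta_opp_face p a : dcell k p -> in_delta k (opp_face p a) p.
Proof. by move=> dp; split => //; apply: opp_face_sub. Qed.

Lemma opp_face_eq_mem p q a : dcell k p -> dcell k q ->
  {subset opp_face p a <= cverts q} -> opp_face q a =i opp_face p a.
Proof.
move=> dp dq pq v; apply/idP/idP => [/(opp_faceP _ _ dq)[i -> ia]|vp].
  have vp : vertex p i \in opp_face p a by apply/(opp_faceP _ _ dp); exists i.
  by have := pq _ vp; rewrite mem_cverts_vertex => /eqP <-.
by move: (vp); rewrite !mem_filter => /andP[-> _]; rewrite pq.
Qed.

Lemma act_letter_in_delta p x : dcell k p ->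
  in_delta k (opp_face p x.1) (act_letter Gam Om x p).
Proof.
move=> dp; have [_ Om_hom _] := Om_ord (facet_opp_face x.1 dp).
by have [Om_in _ _ _] := Om_hom p (in_delta_opp_face x.1 dp); apply: Om_in.
Qed.

Lemma act_letter_dcell p x : dcell k p -> dcell k (act_letter Gam Om x p).
Proof. by move=> /(act_letter_in_delta x) []. Qed.

Lemma act_letter_merge p a l l' : dcell k p ->
  act_letter Gam Om (a, l) (act_letter Gam Om (a, l') p) = act_letter Gam Om (a, l + l') p.
Proof.
move=> dp; have [dq pq] := act_letter_in_delta (a, l') dp.
have [Om_set Om_hom _] := Om_ord (facet_opp_face a dp).
have [_ _ _ Om_add] := Om_hom p (in_delta_opp_face a dp).
rewrite /act_letter /= (Om_set _ l _ (opp_face_eq_mem dp dq pq)) ?Om_add //.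
Qed.

Lemma act_cat u v p : act Gam Om (u ++ v) p = act Gam Om u (act Gam Om v p).
Proof. exact: foldr_cat. Qed.

Lemma act_dcell w p : dcell k p -> dcell k (act Gam Om w p).
Proof. by move=> dp; elim: w => //= x w; apply: act_letter_dcell. Qed.

Lemma act_weq w1 w2 : weq k w1 w2 -> forall p, dcell k p -> act Gam Om w1 p = act Gam Om w2 p.
Proof.
elim=> {w1 w2} //.
- by move=> w1 w2 _ IH p dp; rewrite IH.
- by move=> w1 w2 w3 _ IH1 _ IH2 p dp; rewrite IH1 // IH2.
- by move=> u1 u2 v1 v2 _ IHu _ IHv p dp; rewrite !act_cat IHv // IHu // act_dcell.
- by move=> i l l' p dp; rewrite /= act_letter_merge.
all: move=> i p dp; have [_ Om_hom _] := Om_ord (facet_opp_face i dp).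
all: by have [] := Om_hom p (in_delta_opp_face i dp).
Qed.

Lemma delta_opp_face_large p i : 0 < k -> dcell k p -> exists2 L,
  uniq L && (size L == k) & forall q, q \in L -> in_delta k (opp_face p (root_color i)) q.
Proof.
move=> k_gt0 dp; have [r [dr ri agree]] := exists_dcell_last_pos_neq i dp.
have agree_face v :
    v \in opp_face p (root_color i) -> exists2 i', v = vertex r i' & i' != i.
  case/(opp_faceP _ _ dp) => i' -> i'i; rewrite (inj_eq root_color_inj) in i'i.
  by exists i'; rewrite ?agree.
exists (r :: [seq rcons r (i, j) | j <- iota 1 k.-1]).
  rewrite /= size_map size_iota prednK // eqxx andbT map_inj_uniq ?iota_uniq ?andbT.
    by apply/mapP => -[j _ /(congr1 size)]; rewrite size_rcons => /n_Sn.
  by move=> j j' /(congr1 (last (ord0, 0))); rewrite !last_rcons => -[].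
move=> q; rewrite in_cons => /orP[/eqP->|/mapP[j jk ->]].
  by split => // v /agree_face[i' -> _]; apply: vertex_in_cverts.
split; first by move: jk; rewrite mem_iota add1n prednK // dcell_rcons dr ri.
move=> v /agree_face[i' -> i'i].
by rewrite -(@vertex_rcons_other _ r (i, j) i' i'i) vertex_in_cverts.
Qed.

(* A nontrivial power of a generator moves every d-cell: otherwise the orbit of
   p under Omega_sigma would have fewer than k elements, whereas transitivity
   makes it all of delta(sigma), which has k elements. *)
Lemma act_letter_moves p i l : dcell k p -> 0 < l < k ->
  act_letter Gam Om (root_color i, l) p != p.
Proof.
move=> dp /andP[l_gt0 lk]; rewrite /act_letter /=.
set sigma := [seq v <- _ | _]; apply/eqP => fix_p.
have [_ Om_hom Om_trans] := Om_ord (facet_opp_face (root_color i) dp).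
have [_ _ _ Om_add] := Om_hom p (in_delta_opp_face _ dp).
have periodic m b : Om sigma (b + m * l) p = Om sigma b p.
  elim: m => [|m IH]; first by rewrite mul0n addn0.
  by rewrite mulSn addnCA addnC Om_add fix_p IH.
have [L /andP[uL /eqP sizeL] L_delta] := delta_opp_face_large i (ltn_trans l_gt0 lk) dp.
have : {subset L <= [seq Om sigma b p | b <- iota 0 l]}.
  move=> q /L_delta/(Om_trans p q (in_delta_opp_face _ dp))[a <-].
  by rewrite (divn_eq a l) addnC periodic map_f // mem_iota ltn_pmod.
by move/(uniq_leq_size uL); rewrite size_map size_iota sizeL leqNgt lk.
Qed.

Lemma act_letter_adjacent p i l : dcell k p -> 0 < l < k ->
  adjacent i p (act_letter Gam Om (root_color i, l) p).
Proof.
move=> dp lk; have [dq pq] := act_letter_in_delta (root_color i, l) dp.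
apply: (adjacent_of_vertex_agree dp dq (act_letter_moves i dp lk)) => i' i'i.
apply/eqP; rewrite -mem_cverts_vertex; apply: pq; apply/(opp_faceP _ _ dp).
by exists i'; rewrite // (inj_eq root_color_inj).
Qed.

(* A reduced word walks in the tree of d-cells without backtracking (the
   [toward] clause), so every position it crosses separates tau from its image. *)
Lemma reduced_act_forked tau w : dcell k tau -> reduced k w ->
  exists c s t, [/\ tau = c ++ s, act Gam Om w tau = c ++ t, forked s t,
    omap root_color (toward s t) = omap fst (ohead w) &
    {subset map fst w <= map root_color (map fst (s ++ t))}].
Proof.
move=> dt; elim: w => [_|[a l] w IH /and3P[lk hw rw]].
  by exists tau, [::], [::]; rewrite cats0.
have [c [s [t [etau ew fk tw sub]]]] := IH rw.
have [i ai] := root_color_surj a; subst a.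
have ti : toward s t != Some i.
  apply/eqP => ti; move: hw tw; rewrite ti /=.
  by case: (w) => [|y w'] //= hw [yi]; rewrite yi eqxx in hw.
have adj : adjacent i (c ++ t) (act Gam Om ((root_color i, l) :: w) tau).
  by rewrite /= ew; apply: act_letter_adjacent; rewrite // -ew act_dcell.
have [c' [s' [t' [etau' ew' fk' tw' sub']]]] := forked_step etau fk ti adj.
exists c', s', t'; split => //; first by rewrite tw'.
move=> b; rewrite in_cons => /orP[/eqP->|bw]; first by rewrite /= map_f // toward_mem.
exact: sub_map sub' _ (sub _ bw).
Qed.

Lemma act_keeps_cell w tau (rho : seq (vtx d)) :
  dcell k tau -> {subset rho <= cverts tau} ->
  all (fun x => x.1 \notin map Gam rho) w -> {subset rho <= cverts (act Gam Om w tau)}.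
Proof.
move=> dt rt; elim: w => //= x w IH /andP[xr /IH rw] v vr.
have [_] := act_letter_in_delta x (act_dcell w dt); apply.
by rewrite mem_filter rw // andbT; apply: contraNneq xr => <-; rewrite map_f.
Qed.

End Action.

Theorem lemma5 (d k : nat) (Hd : 1 <= d) (Hk : 1 <= k)
    (Gam : vtx d -> 'I_d.+1)
    (Om : seq (vtx d) -> nat -> seq ('I_d.+1 * nat) -> seq ('I_d.+1 * nat)) :
  coloring k Gam -> k_ordering k Om ->
  forall tau : seq ('I_d.+1 * nat), dcell k tau ->
  forall rho : seq (vtx d), is_cell k rho -> {subset rho <= cverts tau} ->
  forall g : word d,
    {subset rho <= cverts (act Gam Om g tau)} <->
    inK k (fun j => j \notin map Gam rho) g.
Proof.
move=> col ord tau dt rho _ rt g; split; last first.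
  case=> w [aw gw]; have := act_keeps_cell Hd col ord dt rt aw.
  by rewrite (act_weq Hd col ord gw dt).
move=> rg; have [w gw rw] := weq_reduced Hk g.
exists w; split => //; apply/allP => x xw; apply/negP => /mapP[v vr xv].
have [c [s [t [etau ew fk _ sub]]]] := reduced_act_forked Hd col ord dt rw.
have /mapP[i _ vi] := rt _ vr.
have : i \in map fst (s ++ t).
  rewrite -(mem_map (root_color_inj col)) -(color_vertex col i dt) -vi -xv.
  by apply: sub; rewrite map_f.
move/(vertex_forked_notin_cverts c fk)/negP; apply.
by rewrite -etau -ew -vi -(act_weq Hd col ord gw dt) rg.
Qed.
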